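(* Let $G$ be the complete graph on vertices $o,u,v,d$ and $H$ have the single OD-pair $(o,d)$. Take two classes with $\lambda(I^1)=3$, $\lambda(I^2)=4$ and the following costs, where $M\ge 100$ is a constant: class 1: $c_{(o,u)}(x)=x$, $c_{(u,v)}(x)=x+18$, $c_{(v,d)}(x)=x$, $c_{(o,d)}(x)=7x$, and $c_{(o,v)}=c_{(v,u)}=c_{(u,d)}=x+M$; class 2: $c_{(o,u)}(x)=5x$, $c_{(o,v)}(x)=x$, $c_{(u,d)}(x)=x$, $c_{(v,d)}(x)=5x$, $c_{(o,d)}(x)=x+10$, and $c_{(u,v)}=c_{(v,u)}=x+M$. Let $\sigma$ have all class 1 users on $ouvd$ and all class 2 users on $od$; let $\hat\sigma$ have all class 1 users on $od$, half of the class 2 users (measure $2$) on $oud$ and the other half on $ovd$. Then $\sigma$ and $\hat\sigma$ are both equilibria and induce different flows (e.g. flow $4$ versus $3$ on arc $(o,d)$). In particular a two-terminal network can have multiple equilibrium flows with only two classes of users.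
   Context: Model: the directed version of $G$ replaces each edge by two opposite arcs; routes are the directed $(o,d)$-paths ($od$, $oud$, $ovd$, $ouvd$, $ovud$); costs on arcs not listed (which lie on no $(o,d)$-path) are irrelevant. Users form a bounded interval with Lebesgue measure $\lambda$; the flow on an arc is the measure of users whose route contains it; a user's route cost is the sum over its arcs of his class's cost function evaluated at the arc flow; an equilibrium is a strategy profile in which every user's route has minimal cost among all $(o,d)$-routes. *)

From Stdlib Require Import Reals List.
Import ListNotations.
Open Scope R_scope.

Inductive node := o | u | v | d.
Definition arc := (node * node)%type.

(* The (o,d)-routes in the directed version of K4 on {o,u,v,d}. *)
Inductive route := R_od | R_oud | R_ovd | R_ouvd | R_ovud.

Definition arcs (r : route) : list arc :=
  match r with
  | R_od => [(o,d)]
  | R_oud => [(o,u); (u,d)]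
  | R_ovd => [(o,v); (v,d)]
  | R_ouvd => [(o,u); (u,v); (v,d)]
  | R_ovud => [(o,v); (v,u); (u,d)]
  end.

(* Users: I = [0,7); class 1 = [0,3) (measure 3), class 2 = [3,7) (measure 4). *)
Definition users (x : R) : Prop := 0 <= x < 7.
Definition cls (x : R) : nat := if Rlt_dec x 3 then 1%nat else 2%nat.

(* Arc cost functions; arcs lying on no (o,d)-path get cost 0 (irrelevant). *)
Definition cost (M : R) (k : nat) (a : arc) (x : R) : R :=
  match k with
  | 1%nat =>
    match a with
    | (o,u) => x | (u,v) => x + 18 | (v,d) => x | (o,d) => 7 * x
    | (o,v) => x + M | (v,u) => x + M | (u,d) => x + M
    | _ => 0 end
  | _ =>
    match a with
    | (o,u) => 5 * x | (o,v) => x | (u,d) => x | (v,d) => 5 * x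
    | (o,d) => x + 10 | (u,v) => x + M | (v,u) => x + M
    | _ => 0 end
  end.

Definition route_cost (M : R) (k : nat) (f : arc -> R) (r : route) : R :=
  fold_right (fun a s => cost M k a (f a) + s) 0 (arcs r).

Definition profile := R -> route.

Definition users_on (s : profile) (a : arc) (x : R) : Prop :=
  users x /\ In a (arcs (s x)).

(* Lebesgue measure of an elementary set: S is a finite disjoint union of
   half-open intervals [a_i, b_i) and m is the sum of their lengths. *)
Definition has_measure (S : R -> Prop) (m : R) : Prop :=
  exists l : list (R * R),
    (forall p, In p l -> fst p <= snd p) /\
    ForallOrdPairs (fun p q => snd p <= fst q \/ snd q <= fst p) l /\
    (forall x, S x <-> exists p, In p l /\ fst p <= x < snd p) /\
    m = fold_right (fun p t => snd p - fst p + t) 0 l.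

Definition induces (s : profile) (f : arc -> R) : Prop :=
  forall a, has_measure (users_on s a) (f a).

Definition equilibrium (M : R) (s : profile) : Prop :=
  exists f, induces s f /\
    forall x, users x -> forall r,
      route_cost M (cls x) f (s x) <= route_cost M (cls x) f r.

Definition sigma0 : profile := fun x => if Rlt_dec x 3 then R_ouvd else R_od.
Definition sigma1 : profile := fun x =>
  if Rlt_dec x 3 then R_od else if Rlt_dec x 5 then R_oud else R_ovd.

(* Under either profile, the set of users of every arc is a single half-open
   interval [lo, hi) (possibly empty, lo = hi), so its Lebesgue measure is
   hi - lo.  We therefore describe each profile by its "support" map
   arc -> interval, prove that it describes the users of every arc, and read
   off the induced flow as the interval widths (lemma [interval_measure]).
   Under these flows every user's route is a best response, which we check
   class by class by computing the cost of all five (o,d)-routes: under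
   sigma0 the routes ouvd (class 1, cost 27) and od (class 2, cost 14) are
   optimal; under sigma1 the routes od (class 1, cost 21) and oud, ovd
   (class 2, cost 12) are.  The constant M >= 100 only serves to make the
   remaining routes expensive.  The flows on (o,d) are 4 and 3. *)
From Stdlib Require Import Reals List Lra.
Import ListNotations.
Open Scope R_scope.

(* A set that is exactly the half-open interval [a, b) has measure b - a;
   with a = b this also covers the empty set. *)
Lemma interval_measure (S : R -> Prop) (a b : R) :
  a <= b -> (forall x, S x <-> a <= x < b) -> has_measure S (b - a).
Proof.
  intros Hab HS; exists [(a, b)]; repeat split.
  - intros p [<- | []]; exact Hab.
  - repeat constructor.
  - intros Sx; exists (a, b); split; [now left | now apply HS].
  - intros [p [[<- | []] Hp]]; now apply HS.
  - simpl; ring.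
Qed.

Definition flow_of (supp : arc -> R * R) (a : arc) : R :=
  snd (supp a) - fst (supp a).

Lemma induces_flow_of (s : profile) (supp : arc -> R * R) :
  (forall a, fst (supp a) <= snd (supp a)) ->
  (forall a x, users_on s a x <-> fst (supp a) <= x < snd (supp a)) ->
  induces s (flow_of supp).
Proof.
  intros Hle Hsupp a; apply interval_measure; [apply Hle | apply Hsupp].
Qed.

Definition supp0 (a : arc) : R * R :=
  match a with
  | (o,u) | (u,v) | (v,d) => (0, 3)
  | (o,d) => (3, 7)
  | _ => (0, 0)
  end.

Definition supp1 (a : arc) : R * R :=
  match a with
  | (o,d) => (0, 3)
  | (o,u) | (u,d) => (3, 5)
  | (o,v) | (v,d) => (5, 7)
  | _ => (0, 0)
  end.

Ltac solve_support :=
  split;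
  [ intros [Hu Hin]; simpl in Hin;
    repeat (destruct Hin as [Hin | Hin]; [try discriminate Hin |]);
    solve [contradiction | simpl; lra]
  | simpl; intros Hx; split; [lra | simpl; first [tauto | lra]] ].

Lemma supp0_spec (a : arc) (x : R) :
  users_on sigma0 a x <-> fst (supp0 a) <= x < snd (supp0 a).
Proof.
  destruct a as [[] []]; unfold users_on, users, sigma0;
    destruct (Rlt_dec x 3); solve_support.
Qed.

Lemma supp1_spec (a : arc) (x : R) :
  users_on sigma1 a x <-> fst (supp1 a) <= x < snd (supp1 a).
Proof.
  destruct a as [[] []]; unfold users_on, users, sigma1;
    destruct (Rlt_dec x 3); [| destruct (Rlt_dec x 5) ..]; solve_support.
Qed.

Lemma sigma0_induces : induces sigma0 (flow_of supp0).
Proof.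
  apply induces_flow_of; [intros [[] []]; simpl; lra | exact supp0_spec].
Qed.

Lemma sigma1_induces : induces sigma1 (flow_of supp1).
Proof.
  apply induces_flow_of; [intros [[] []]; simpl; lra | exact supp1_spec].
Qed.

(* Best responses under the flow of sigma0 (flow 3 on o-u-v-d, 4 on od):
   class 1 pays 27 on ouvd versus 28 on od and at least M on the others;
   class 2 pays 14 on od versus 15 on oud and ovd. *)
Lemma sigma0_class1_best (M : R) (HM : 100 <= M) (r : route) :
  route_cost M 1 (flow_of supp0) R_ouvd <= route_cost M 1 (flow_of supp0) r.
Proof. destruct r; unfold route_cost, flow_of; simpl; lra. Qed.

Lemma sigma0_class2_best (M : R) (HM : 100 <= M) (r : route) :
  route_cost M 2 (flow_of supp0) R_od <= route_cost M 2 (flow_of supp0) r.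
Proof. destruct r; unfold route_cost, flow_of; simpl; lra. Qed.

(* Best responses under the flow of sigma1 (flow 3 on od, 2 on each of
   ou, ud, ov, vd): class 1 pays 21 on od versus 22 on ouvd; class 2 pays
   12 on both oud and ovd versus 13 on od. *)
Lemma sigma1_class1_best (M : R) (HM : 100 <= M) (r : route) :
  route_cost M 1 (flow_of supp1) R_od <= route_cost M 1 (flow_of supp1) r.
Proof. destruct r; unfold route_cost, flow_of; simpl; lra. Qed.

Lemma sigma1_class2_best (M : R) (HM : 100 <= M) (r : route) :
  route_cost M 2 (flow_of supp1) R_oud <= route_cost M 2 (flow_of supp1) r /\
  route_cost M 2 (flow_of supp1) R_ovd <= route_cost M 2 (flow_of supp1) r.
Proof. destruct r; unfold route_cost, flow_of; simpl; lra. Qed.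

Theorem mainTheorem17 (M : R) (HM : 100 <= M) :
  equilibrium M sigma0 /\ equilibrium M sigma1 /\
  has_measure (users_on sigma0 (o,d)) 4 /\
  has_measure (users_on sigma1 (o,d)) 3.
Proof.
  split; [| split; [| split]].
  - exists (flow_of supp0); split; [exact sigma0_induces |].
    intros x _ r; unfold cls, sigma0; destruct (Rlt_dec x 3).
    + apply sigma0_class1_best, HM.
    + apply sigma0_class2_best, HM.
  - exists (flow_of supp1); split; [exact sigma1_induces |].
    intros x _ r; unfold cls, sigma1; destruct (Rlt_dec x 3);
      [| destruct (Rlt_dec x 5)].
    + apply sigma1_class1_best, HM.
    + apply (sigma1_class2_best M HM r).
    + apply (sigma1_class2_best M HM r).
  - replace 4 with (flow_of supp0 (o,d)) by (unfold flow_of; simpl; lra).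
    apply sigma0_induces.
  - replace 3 with (flow_of supp1 (o,d)) by (unfold flow_of; simpl; lra).
    apply sigma1_induces.
Qed.
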